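(* Let $X$ be any topological space. Every prime ideal of $B_1(X)$ is contained in a unique maximal ideal of $B_1(X)$; that is, $B_1(X)$ is a Gelfand ring.
   Context: For a topological space $X$, $B_1(X)$ denotes the commutative ring with unity (pointwise operations) of all Baire one functions $f:X\to\mathbb{R}$, i.e. pointwise limits of sequences of continuous real-valued functions on $X$. *)

From Stdlib Require Import Reals.
Open Scope R_scope.

Record TopSpace := {
  pt :> Type;
  is_open : (pt -> Prop) -> Prop;
  open_full : is_open (fun _ => True);
  open_union : forall (F : (pt -> Prop) -> Prop),
      (forall U, F U -> is_open U) ->
      is_open (fun x => exists U, F U /\ U x);
  open_inter : forall U V, is_open U -> is_open V ->
      is_open (fun x => U x /\ V x)
}.

Definition continuous_on (X : TopSpace) (f : X -> R) : Prop :=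
  forall D : R -> Prop, open_set D -> is_open X (fun x => D (f x)).

Definition baire_one (X : TopSpace) (f : X -> R) : Prop :=
  exists fn : nat -> X -> R,
    (forall n, continuous_on X (fn n)) /\
    (forall x, Un_cv (fun n => fn n x) (f x)).

Definition b1_ideal (X : TopSpace) (I : (X -> R) -> Prop) : Prop :=
  (forall f, I f -> baire_one X f) /\
  I (fun _ => 0) /\
  (forall f g, I f -> I g -> I (fun x => f x + g x)) /\
  (forall h f, baire_one X h -> I f -> I (fun x => h x * f x)).

Definition b1_proper (X : TopSpace) (I : (X -> R) -> Prop) : Prop :=
  ~ I (fun _ => 1).

Definition b1_prime_ideal (X : TopSpace) (P : (X -> R) -> Prop) : Prop :=
  b1_ideal X P /\ b1_proper X P /\
  (forall f g, baire_one X f -> baire_one X g ->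
     P (fun x => f x * g x) -> P f \/ P g).

Definition b1_maximal_ideal (X : TopSpace) (M : (X -> R) -> Prop) : Prop :=
  b1_ideal X M /\ b1_proper X M /\
  (forall J, b1_ideal X J -> b1_proper X J ->
     (forall f, M f -> J f) -> forall f, J f -> M f).

From Stdlib Require Import Reals Lra Psatz Classical FunctionalExtensionality PropExtensionality.
Open Scope R_scope.

(* Let M be the set of Baire one functions that are not invertible modulo the
   prime ideal P.  Every proper ideal containing P lies in M, so it suffices
   that M is an ideal, and the only issue is closure under sums.  If
   h f + h g + p = 1, write 1 = a + b with a = h f.  The functions
   (b - 1/2)^+ and (a - 1/2)^+ have product 0, so one of them, say (b - 1/2)^+,
   lies in P; then a^2 + ((b - 1/2)^+)^2 >= 1/16 is invertible in B_1(X), which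
   makes a, hence f, invertible modulo P.  All that is used about B_1(X) is its
   closure under continuous operations. *)

Definition jointly_continuous (phi : R -> R -> R) : Prop :=
  forall a b eps, 0 < eps -> exists del, 0 < del /\
    forall s t, Rabs (s - a) < del -> Rabs (t - b) < del ->
      Rabs (phi s t - phi a b) < eps.

Lemma open_set_ball (a d : R) : open_set (fun s => Rabs (s - a) < d).
Proof.
  intros x Hx.
  assert (Hp : 0 < d - Rabs (x - a)) by lra.
  exists (mkposreal _ Hp); intros y Hy; unfold disc in Hy; simpl in Hy.
  pose proof (Rabs_triang (y - x) (x - a)) as T.
  replace (y - x + (x - a)) with (y - a) in T by ring; lra.
Qed.

Lemma continuous_on_const (X : TopSpace) (c : R) : continuous_on X (fun _ => c).
Proof.
  intros D _; destruct (classic (D c)) as [Dc | nDc].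
  - replace (fun _ : X => D c) with (fun _ : X => True); [apply open_full|].
    apply functional_extensionality; intros; apply propositional_extensionality; tauto.
  - replace (fun _ : X => D c)
      with (fun x : X => exists U, (fun _ : X -> Prop => False) U /\ U x).
    + apply open_union; contradiction.
    + apply functional_extensionality; intros; apply propositional_extensionality.
      split; [intros [_ [[] _]] | contradiction].
Qed.

Lemma continuous_on_comp (X : TopSpace) (psi : R -> R) (f : X -> R) :
  continuity psi -> continuous_on X f -> continuous_on X (fun x => psi (f x)).
Proof.
  intros Hpsi Hf D HD.
  exact (Hf (image_rec psi D) (proj1 (continuity_P3 psi) Hpsi D HD)).
Qed.

(* The preimage of an open D is the union of the boxes
   {|f - a| < del} ∩ {|g - b| < del} whose image under phi lies in D. *)
Lemma continuous_on_comp2 (X : TopSpace) (phi : R -> R -> R) (f g : X -> R) :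
  jointly_continuous phi -> continuous_on X f -> continuous_on X g ->
  continuous_on X (fun x => phi (f x) (g x)).
Proof.
  intros Hphi Hf Hg D HD.
  set (boxes := fun U : X -> Prop => exists a b del, 0 < del /\
     (forall s t, Rabs (s - a) < del -> Rabs (t - b) < del -> D (phi s t)) /\
     U = (fun y => Rabs (f y - a) < del /\ Rabs (g y - b) < del)).
  replace (fun x => D (phi (f x) (g x))) with (fun x => exists U, boxes U /\ U x).
  - apply open_union; intros U [a [b [del [_ [_ ->]]]]].
    apply open_inter; [apply (Hf (fun s => Rabs (s - a) < del)) |
                       apply (Hg (fun s => Rabs (s - b) < del))]; apply open_set_ball.
  - apply functional_extensionality; intro y; apply propositional_extensionality; split.
    + intros [U [[a [b [del [_ [HboxD ->]]]]] [Hfy Hgy]]]; exact (HboxD _ _ Hfy Hgy).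
    + intro Hy; destruct (HD _ Hy) as [e He].
      destruct (Hphi (f y) (g y) e (cond_pos e)) as [del [Hdel Hphi_del]].
      exists (fun z => Rabs (f z - f y) < del /\ Rabs (g z - g y) < del); split.
      * exists (f y), (g y), del; repeat split; auto.
        intros s t Hs Ht; apply He; exact (Hphi_del s t Hs Ht).
      * unfold Rminus; rewrite !Rplus_opp_r, Rabs_R0; split; exact Hdel.
Qed.

Lemma baire_one_const (X : TopSpace) (c : R) : baire_one X (fun _ => c).
Proof.
  exists (fun _ _ => c); split; [intro; apply continuous_on_const|].
  intros x eps Heps; exists 0%nat; intros; unfold Rdist, Rminus.
  rewrite Rplus_opp_r, Rabs_R0; lra.
Qed.

Lemma baire_one_comp (X : TopSpace) (psi : R -> R) (f : X -> R) :
  continuity psi -> baire_one X f -> baire_one X (fun x => psi (f x)).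
Proof.
  intros Hpsi [fn [Hfn_cont Hfn_lim]].
  exists (fun n x => psi (fn n x)); split.
  - intro n; apply continuous_on_comp; auto.
  - intro x; apply continuity_seq; auto.
Qed.

Lemma baire_one_comp2 (X : TopSpace) (phi : R -> R -> R) (f g : X -> R) :
  jointly_continuous phi -> baire_one X f -> baire_one X g ->
  baire_one X (fun x => phi (f x) (g x)).
Proof.
  intros Hphi [fn [Hfn_cont Hfn_lim]] [gn [Hgn_cont Hgn_lim]].
  exists (fun n x => phi (fn n x) (gn n x)); split.
  - intro n; apply continuous_on_comp2; auto.
  - intros x eps Heps; destruct (Hphi (f x) (g x) eps Heps) as [del [Hdel Hphi_del]].
    destruct (Hfn_lim x del Hdel) as [N1 H1]; destruct (Hgn_lim x del Hdel) as [N2 H2].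
    exists (max N1 N2); intros n Hn; apply Hphi_del; [apply H1 | apply H2]; lia.
Qed.

Lemma jointly_continuous_plus : jointly_continuous Rplus.
Proof.
  intros a b eps Heps; exists (eps / 2); split; [lra|]; intros s t Hs Ht.
  replace (s + t - (a + b)) with ((s - a) + (t - b)) by ring.
  pose proof (Rabs_triang (s - a) (t - b)); lra.
Qed.

(* With del <= 1 and del * (|a| + |b| + 1) <= eps, use
   s t - a b = (s - a)(t - b) + a (t - b) + b (s - a). *)
Lemma jointly_continuous_mult : jointly_continuous Rmult.
Proof.
  intros a b eps Heps.
  pose proof (Rabs_pos a); pose proof (Rabs_pos b).
  set (K := Rabs a + Rabs b + 1).
  assert (HK : 0 < K) by (unfold K; lra).
  exists (Rmin 1 (eps / K)); split; [apply Rmin_pos; [lra | apply Rdiv_lt_0_compat; lra]|].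
  intros s t Hs Ht.
  assert (Hdel1 : Rmin 1 (eps / K) <= 1) by apply Rmin_l.
  assert (HdelK : Rmin 1 (eps / K) * K <= eps).
  { apply Rle_trans with (eps / K * K); [apply Rmult_le_compat_r; [lra | apply Rmin_r]|].
    right; field; lra. }
  replace (s * t - a * b) with ((s - a) * (t - b) + a * (t - b) + b * (s - a)) by ring.
  pose proof (Rabs_triang ((s - a) * (t - b) + a * (t - b)) (b * (s - a))).
  pose proof (Rabs_triang ((s - a) * (t - b)) (a * (t - b))).
  rewrite !Rabs_mult in *.
  pose proof (Rabs_pos (s - a)); pose proof (Rabs_pos (t - b)).
  unfold K in *; nra.
Qed.

Lemma baire_one_plus (X : TopSpace) (f g : X -> R) :
  baire_one X f -> baire_one X g -> baire_one X (fun x => f x + g x).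
Proof. apply baire_one_comp2, jointly_continuous_plus. Qed.

Lemma baire_one_mult (X : TopSpace) (f g : X -> R) :
  baire_one X f -> baire_one X g -> baire_one X (fun x => f x * g x).
Proof. apply baire_one_comp2, jointly_continuous_mult. Qed.

Lemma continuity_of_lipschitz (psi : R -> R) :
  (forall s t, Rabs (psi s - psi t) <= Rabs (s - t)) -> continuity psi.
Proof.
  intros Hlip a eps Heps; exists eps; split; [exact Heps|].
  intros s [_ Hs]; simpl in *; unfold Rdist in *.
  apply Rle_lt_trans with (Rabs (s - a)); auto.
Qed.

Lemma Rmax_l_lipschitz (c s t : R) : Rabs (Rmax s c - Rmax t c) <= Rabs (s - t).
Proof.
  unfold Rmax; destruct (Rle_dec s c), (Rle_dec t c);
  unfold Rabs; repeat destruct Rcase_abs; lra.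
Qed.

Lemma baire_one_pos_part_shift (X : TopSpace) (f : X -> R) :
  baire_one X f -> baire_one X (fun x => Rmax (f x - 1/2) 0).
Proof.
  apply (baire_one_comp X (fun s => Rmax (s - 1/2) 0)), continuity_of_lipschitz.
  intros s t.
  eapply Rle_trans; [apply Rmax_l_lipschitz | right; f_equal; ring].
Qed.

Lemma baire_one_inv_Rmax (X : TopSpace) (f : X -> R) :
  baire_one X f -> baire_one X (fun x => / Rmax (f x) (1/16)).
Proof.
  apply (baire_one_comp X (/ (fun s => Rmax s (1/16)))%F).
  apply continuity_inv; [apply continuity_of_lipschitz, Rmax_l_lipschitz|].
  intro s; pose proof (Rmax_r s (1/16)); lra.
Qed.

Lemma mem_ext (X : TopSpace) (I : (X -> R) -> Prop) (f g : X -> R) :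
  I f -> (forall x, f x = g x) -> I g.
Proof. intros If Efg; replace g with f; auto; apply functional_extensionality; auto. Qed.

Definition b1_unit_mod (X : TopSpace) (P : (X -> R) -> Prop) (f : X -> R) : Prop :=
  exists h p, baire_one X h /\ P p /\ forall x, h x * f x + p x = 1.

Definition b1_nonunits_mod (X : TopSpace) (P : (X -> R) -> Prop) (f : X -> R) : Prop :=
  baire_one X f /\ ~ b1_unit_mod X P f.

Lemma b1_ideal_sub_nonunits_mod (X : TopSpace) (P J : (X -> R) -> Prop) :
  b1_ideal X J -> b1_proper X J -> (forall f, P f -> J f) ->
  forall f, J f -> b1_nonunits_mod X P f.
Proof.
  intros [JB [_ [JD JM]]] Jproper PJ f Jf; split; [exact (JB f Jf)|].
  intros [h [p [Bh [Pp E]]]]; apply Jproper.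
  apply (mem_ext X J (fun x => h x * f x + p x)); auto.
Qed.

Section UnitMod.

Variables (X : TopSpace) (P : (X -> R) -> Prop).

Lemma b1_unit_mod_of_mul (k f : X -> R) :
  baire_one X k -> b1_unit_mod X P (fun x => k x * f x) -> b1_unit_mod X P f.
Proof.
  intros Bk [h [p [Bh [Pp E]]]].
  exists (fun x => h x * k x), p; repeat split; auto; [apply baire_one_mult; auto|].
  intro x; rewrite <- (E x); ring.
Qed.

Lemma b1_unit_mod_of_add_mem (g p : X -> R) : b1_ideal X P ->
  P p -> b1_unit_mod X P (fun x => g x + p x) -> b1_unit_mod X P g.
Proof.
  intros [_ [_ [PD PM]]] Pp [h [q [Bh [Pq E]]]].
  exists h, (fun x => h x * p x + q x); repeat split; auto.
  intro x; rewrite <- (E x); ring.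
Qed.

Lemma b1_not_unit_mod0 : b1_proper X P -> ~ b1_unit_mod X P (fun _ => 0).
Proof.
  intros Pproper [h [p [_ [Pp E]]]]; apply Pproper.
  apply (mem_ext X P p); auto; intro x; rewrite <- (E x); ring.
Qed.

End UnitMod.

Lemma pos_part_mul_eq0 (a b : R) :
  a + b = 1 -> Rmax (b - 1/2) 0 * Rmax (a - 1/2) 0 = 0.
Proof. intros; unfold Rmax; repeat destruct Rle_dec; nra. Qed.

Lemma pos_part_sq_add_sq_ge (a b : R) :
  a + b = 1 -> Rmax (b - 1/2) 0 * Rmax (b - 1/2) 0 + a * a >= 1/16.
Proof.
  intros Hab; replace a with (1 - b) by lra; unfold Rmax; destruct Rle_dec.
  - nra.
  - pose proof (pow2_ge_0 (b - 3/4)); nra.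
Qed.

Section UnitModPrime.

Variables (X : TopSpace) (P : (X -> R) -> Prop).
Hypothesis P_prime : b1_prime_ideal X P.

(* Witness: with u = (b - 1/2)^+ and w = u^2 + a^2 >= 1/16,
   (a / w) a + u^2 / w = 1. *)
Lemma b1_unit_mod_of_pos_part_mem (a b : X -> R) :
  baire_one X a -> (forall x, a x + b x = 1) ->
  P (fun x => Rmax (b x - 1/2) 0) -> b1_unit_mod X P a.
Proof.
  destruct P_prime as [[PB [_ [_ PM]]] _].
  intros Ba Eab Pu.
  set (u := fun x => Rmax (b x - 1/2) 0) in Pu.
  set (w := fun x => u x * u x + a x * a x).
  set (inv_w := fun x => / Rmax (w x) (1/16)).
  assert (Bu : baire_one X u) by exact (PB _ Pu).
  assert (Binv_w : baire_one X inv_w)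
    by (apply baire_one_inv_Rmax, baire_one_plus; apply baire_one_mult; auto).
  exists (fun x => inv_w x * a x), (fun x => inv_w x * (u x * u x)); repeat split.
  - apply baire_one_mult; auto.
  - apply PM; auto.
  - intro x; assert (Hw : w x >= 1/16) by exact (pos_part_sq_add_sq_ge _ _ (Eab x)).
    unfold inv_w; rewrite Rmax_left by lra; fold (w x); unfold w; field.
    fold (w x); lra.
Qed.

Lemma b1_unit_mod_split (a b : X -> R) :
  baire_one X a -> baire_one X b -> (forall x, a x + b x = 1) ->
  b1_unit_mod X P a \/ b1_unit_mod X P b.
Proof.
  pose proof P_prime as [[_ [P0 _]] [_ Psplit]].
  intros Ba Bb Eab.
  assert (Puv : P (fun x => Rmax (b x - 1/2) 0 * Rmax (a x - 1/2) 0)).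
  { apply (mem_ext X P (fun _ => 0)); auto.
    intro x; rewrite pos_part_mul_eq0; auto. }
  destruct (Psplit _ _ (baire_one_pos_part_shift X b Bb)
                  (baire_one_pos_part_shift X a Ba) Puv) as [Pu | Pv].
  - left; apply (b1_unit_mod_of_pos_part_mem a b); auto.
  - right; apply (b1_unit_mod_of_pos_part_mem b a); auto.
    intro x; rewrite Rplus_comm; auto.
Qed.

Lemma b1_nonunits_mod_ideal : b1_ideal X (b1_nonunits_mod X P).
Proof.
  pose proof P_prime as [P_ideal [Pproper _]].
  split; [intros f [Bf _]; exact Bf|].
  split; [split; [apply baire_one_const | exact (b1_not_unit_mod0 X P Pproper)]|].
  split.
  - intros f g [Bf nf] [Bg ng]; split; [apply baire_one_plus; auto|].
    intros [h [p [Bh [Pp E]]]].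
    pose proof P_ideal as [PB _].
    destruct (b1_unit_mod_split (fun x => h x * f x) (fun x => h x * g x + p x))
      as [Uf | Ug].
    + apply baire_one_mult; auto.
    + apply baire_one_plus; [apply baire_one_mult|]; auto.
    + intro x; rewrite <- (E x); ring.
    + exact (nf (b1_unit_mod_of_mul X P h f Bh Uf)).
    + apply ng, (b1_unit_mod_of_mul X P h g Bh).
      exact (b1_unit_mod_of_add_mem X P _ p P_ideal Pp Ug).
  - intros k f Bk [Bf nf]; split; [apply baire_one_mult; auto|].
    intro U; exact (nf (b1_unit_mod_of_mul X P k f Bk U)).
Qed.

End UnitModPrime.

Theorem theorem2p17 (X : TopSpace) (P : (X -> R) -> Prop) :
  b1_prime_ideal X P ->
  exists M, b1_maximal_ideal X M /\ (forall f, P f -> M f) /\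
    (forall M', b1_maximal_ideal X M' -> (forall f, P f -> M' f) ->
       forall f, M' f <-> M f).
Proof.
  intros HP; pose proof HP as [P_ideal [Pproper _]].
  set (M := b1_nonunits_mod X P).
  assert (M_ideal : b1_ideal X M) by exact (b1_nonunits_mod_ideal X P HP).
  assert (M_proper : b1_proper X M).
  { intros [_ n1]; apply n1; exists (fun _ => 1), (fun _ => 0).
    repeat split; [apply baire_one_const | apply P_ideal | intro; ring]. }
  assert (P_sub_M : forall f, P f -> M f)
    by exact (b1_ideal_sub_nonunits_mod X P P P_ideal Pproper (fun f Pf => Pf)).
  exists M; split; [|split; [exact P_sub_M|]].
  - split; [exact M_ideal | split; [exact M_proper|]].
    intros J J_ideal J_proper MJ.
    exact (b1_ideal_sub_nonunits_mod X P J J_ideal J_proper (fun f Pf => MJ f (P_sub_M f Pf))).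
  - intros M' [M'_ideal [M'_proper M'_max]] PM'.
    pose proof (b1_ideal_sub_nonunits_mod X P M' M'_ideal M'_proper PM') as M'_sub_M.
    intro f; split; [apply M'_sub_M | apply (M'_max M M_ideal M_proper M'_sub_M)].
Qed.
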